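(* Let $a,b\in\mathbb R$, $\sigma\in(0,1]$ and $t\in[0,1]$. Then \[ \delta\big((1-t)\gamma_{a,\sigma}+t\gamma_{b,\sigma}\big)\le\frac14\big(\sigma^{-1}-1\big)^2-(1-t)\log(1-t)-t\log t, \] with the convention $0\log 0=0$.
   Context: On $\mathbb R$, $\gamma_{a,s}$ denotes the Gaussian measure with mean $a$ and variance $s$, and $\gamma=\gamma_{0,1}$. For a probability measure $\mu$ with density $f=d\mu/d\gamma$, $\delta(\mu)=\frac12\int|f'/f|^2d\mu-\int\log f\,d\mu$ is the log-Sobolev deficit. *)

From Stdlib Require Import Reals.
Open Scope R_scope.

(* Lebesgue density of the Gaussian measure gamma_{a,s} (mean a, variance s). *)
Definition gauss_density (a s x : R) : R :=
  exp (- (x - a) ^ 2 / (2 * s)) / sqrt (2 * PI * s).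

Definition mixture_density (a b s t x : R) : R :=
  (1 - t) * gauss_density a s x + t * gauss_density b s x.

Definition rel_density (a b s t x : R) : R :=
  mixture_density a b s t x / gauss_density 0 1 x.

Definition improper_int (f : R -> R) (l : R) : Prop :=
  forall eps : R, 0 < eps -> exists M : R, forall lo hi : R,
    lo <= - M -> M <= hi ->
    exists pr : Riemann_integrable f lo hi, Rabs (RiemannInt pr - l) < eps.

Definition xlnx (x : R) : R := if Req_EM_T x 0 then 0 else x * ln x.

(* Let mu = (1-t) gamma_{a,s} + t gamma_{b,s}, f = d mu / d gamma and
   N = (1-t) q_a gamma_{a,s} + t q_b gamma_{b,s}, where q_c(x) = x - (x-c)/s is
   the logarithmic derivative of d gamma_{c,s} / d gamma; then f' = N / gamma.
   - Fisher term: by Cauchy-Schwarz, (f'/f)^2 mu = N^2 / mu is at most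
     (1-t) q_a^2 gamma_{a,s} + t q_b^2 gamma_{b,s}, whose integral is
     (1-t) a^2 + t b^2 + (1-s)^2/s.
   - Entropy term: f >= (1-t) d gamma_{a,s}/d gamma and f >= t d gamma_{b,s}/d gamma
     give a lower bound for (ln f) mu whose integral is explicit; the
     (1-t) ln(1-t) and t ln t terms come from here.
   Both bounds are "Gaussian quadratics" (a quadratic polynomial in x - c times
   gamma_{c,s}), integrated with the first three moments of gamma_{c,s}.  The
   difference of the two integrals leaves 1/(2s) - 1/2 + (ln s)/2, which is
   at most (1/s - 1)^2 / 4 by ln(1 + v) >= v - v^2/2. *)

From Stdlib Require Import Reals Lra Lia.
From mathcomp Require all_boot all_order all_algebra.
From mathcomp Require all_classical all_reals all_analysis.
From mathcomp Require Rstruct Rstruct_topology.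

(* MathComp-Analysis proves that the square of
   int_0^x exp(-u^2) du tends to pi/4 as x -> +oo; here this fact is
   transported to Stdlib's reals, for any antiderivative F of exp(-u^2) with
   F 0 = 0, by identifying Stdlib's derivatives, PI and cos with theirs. *)
Module GaussianIntegral.
Import all_boot all_order all_algebra.
Import all_classical all_reals all_analysis.
Import Rstruct Rstruct_topology.
Import Order.TTheory GRing.Theory Num.Theory.
Import numFieldNormedType.Exports.
Local Open Scope classical_set_scope.
Local Open Scope ring_scope.

Lemma derivable_pt_lim_cvg (F : R -> R) y l : derivable_pt_lim F y l ->
  (fun h : R => h^-1 * (F (h + y) - F y)) @ (0:R)^' --> l.
Proof.
move=> H; apply/(@cvgrPdist_lt _ R^o) => e /RltP /H [d Hd].
have d0 : (0:R) < d by apply/RltP; exact: cond_pos d.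
near=> h.
have /eqP h0 : h != 0 by near: h; exact: nbhs_dnbhs_neq.
have hd : (Rabs h < d)%coqR.
  by apply/RltP; rewrite RabsE; near: h; exact: (@dnbhs0_lt R R^o (pos d) d0).
move: (Hd h h0 hd) => /RltP. rewrite RabsE distrC.
rewrite /Rdiv RminusE RplusE RmultE RinvE.
by rewrite (addrC h y) [X in _ - X]mulrC.
Unshelve. all: by end_near. Qed.

Lemma derivable_pt_lim_derive1 (F : R -> R) y l : derivable_pt_lim F y l ->
  derivable (F : R^o -> R^o) y 1 /\ derive1 (F : R -> R^o) y = l.
Proof.
move=> /(derivable_pt_lim_cvg F) H.
have E h : h^-1 *: (((F : R^o -> R^o) \o shift y) (h *: (1:R^o)) - F y)
         = h^-1 * (F (h + y) - F y).
  by rewrite /GRing.scale /= mulr1.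
split.
  rewrite /derivable; apply/cvg_ex; exists l.
  by apply: cvg_trans H; apply: near_eq_cvg; near=> h; rewrite E.
rewrite derive1E /derive; apply: cvg_lim => //.
by apply: cvg_trans H; apply: near_eq_cvg; near=> h; rewrite E.
Unshelve. all: by end_near. Qed.

Lemma Rcos_cos (x : R) : Rtrigo_def.cos x = cos x.
Proof.
have := @cvg_cos_coeff' R x => /cvg_lim <- //.
apply/esym/cvg_lim; first exact: Rhausdorff.
rewrite /Rtrigo_def.cos; case: (exist_cos (Rsqr x)) => y.
rewrite /cos_in /infinite_sum /= => cos_ub.
apply/(@cvgrPdist_lt _ R^o) => /= e /RltP /cos_ub[N NU].
near=> n.
have nN : (n.-1 >= N)%coq_nat.
  apply/ssrnat.leP; near: n; exists N.+1 => // k /= Hk.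
  by rewrite -ltnS prednK // (leq_trans _ Hk).
move: NU => /(_ _ nN) /[!RdistE] /RltP /=.
rewrite distrC sum_f_R0E.
have -> : n.-1.+1 = n by near: n; exists 1%N => // k /= Hk; rewrite prednK.
congr (`| _ - _ | < e).
apply: eq_bigr=> k _. rewrite /cos_coeff' /cos_n.
rewrite /Rsqr RdivE !RmultE !RpowE INRE factE -expr2 -exprM -mul2n multE.
change (-1)%coqR with (-1 : R); by rewrite mulrAC.
Unshelve. all: by end_near. Qed.

Lemma R2_two : (2%coqR : R) = 2%R.
Proof. by rewrite /= -[2%coqR]/(1 + 1)%coqR. Qed.

(* Both PI/2 and pi/2 are the unique zero of cos in [0, 2]. *)
Lemma PI_pi : PI = pi.
Proof.
suff E : (PI / 2)%coqR = pi / 2.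
  move: E; rewrite RdivE R2_two => E.
  by rewrite -[PI](@divfK _ 2) // E divfK.
apply: (@cos_02_uniq R).
- apply/andP; split; apply/RleP; rewrite -?R2_two;
    change (0%R : R) with R0; have := PI_RGT_0; have := PI_4; lra.
- by rewrite -Rcos_cos cos_PI2.
- exact: (@pihalf_02_cos_pihalf R).1.
- exact: (@cos_pihalf R).
Qed.

Lemma integral0_gauss_antiderivative (F : R -> R)
  (HF : forall x, derivable_pt_lim F x (exp (- (x * x)))) (F0 : F 0%coqR = 0%coqR) :
  forall x : R, 0 < x -> gauss_integral_proof.integral0_gauss x = F x.
Proof.
move=> x x0.
have gE y : exp (- (y * y)) = gauss_fun y.
  by rewrite RexpE /gauss_fun RoppE RmultE expr2.
have Fc y : {for y, continuous F}.
  apply/continuity_pt_cvg; apply: derivable_continuous_pt.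
  by exists (exp (- (y * y))); exact: HF.
have gc : {within `[0, x], continuous gauss_fun}.
  by apply: continuous_subspaceT => y; exact: continuous_gauss_fun.
have Fd : derivable_oo_LRcontinuous (F : R -> R^o) 0 x.
  split.
  + by move=> y _; exact: (derivable_pt_lim_derive1 _ _ _ (HF y)).1.
  + exact: cvg_at_right_filter (Fc 0).
  + exact: cvg_at_left_filter (Fc x).
have F'E : {in `]0, x[, derive1 (F : R -> R^o) =1 gauss_fun}.
  by move=> y _; rewrite (derivable_pt_lim_derive1 _ _ _ (HF y)).2 gE.
have := @continuous_FTC2 R gauss_fun F 0 x x0 gc Fd F'E.
rewrite /gauss_integral_proof.integral0_gauss /Rintegral => -> /=.
by rewrite F0 subr0.
Qed.

Lemma antiderivative_sqr_limit (F : R -> R)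
  (HF : forall x, derivable_pt_lim F x (exp (- (x * x)))) (F0 : F 0%coqR = 0%coqR) :
  forall eps, (0 < eps)%coqR -> exists M, forall x, (M < x)%coqR ->
    (Rabs (F x * F x - PI / 4) < eps)%coqR.
Proof.
move=> eps /RltP e0.
move/(@cvgrPdist_lt _ R^o): (@gauss_integral_proof.cvg_integral0_gauss_sqr R).
move=> /(_ _ e0) -[M [_ HM]].
exists (Rmax M 0) => x /RltP; rewrite RmaxE gt_max => /andP[xM x0].
have := HM x xM; rewrite (integral0_gauss_antiderivative F HF F0) // -PI_pi.
rewrite RabsE distrC RminusE RmultE RdivE.
have -> : (4%coqR : R) = 4%R by rewrite -[4%coqR]/(IZR (Z.of_nat 4)) -INR_IZR_INZ INRE.
by rewrite expr2 => /RltP.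
Qed.
End GaussianIntegral.

From Coquelicot Require Import Coquelicot.
Open Scope R_scope.

Definition continuous_R (g : R -> R) : Prop := forall x, continuous g x.

Definition is_RInt_R (g : R -> R) (L : R) : Prop :=
  forall eps, 0 < eps -> exists M, forall lo hi,
    lo <= - M -> M <= hi -> Rabs (RInt g lo hi - L) < eps.

Lemma continuous_R_plus f g :
  continuous_R f -> continuous_R g -> continuous_R (fun x => f x + g x).
Proof. intros Hf Hg x; apply (continuous_plus f g x (Hf x) (Hg x)). Qed.

Lemma continuous_R_scal k g : continuous_R g -> continuous_R (fun x => k * g x).
Proof.
intros Hg x; apply (@continuous_mult R_UniformSpace R_AbsRing (fun _ => k) g x), Hg.
apply continuous_const.
Qed.

Lemma continuous_R_ex_RInt g a b : continuous_R g -> ex_RInt g a b.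
Proof.
intros Hg; apply (@ex_RInt_continuous R_CompleteNormedModule); intros; apply Hg.
Qed.

Lemma is_RInt_R_improper_int g L :
  continuous_R g -> is_RInt_R g L -> improper_int g L.
Proof.
intros Hg H eps Heps; destruct (H eps Heps) as [M HM]; exists M.
intros lo hi Hlo Hhi.
exists (ex_RInt_Reals_0 _ _ _ (continuous_R_ex_RInt g lo hi Hg)).
rewrite <- RInt_Reals; apply HM; auto.
Qed.

Lemma is_RInt_R_ext g h L : (forall x, g x = h x) -> is_RInt_R g L -> is_RInt_R h L.
Proof.
intros E H eps Heps; destruct (H eps Heps) as [M HM]; exists M; intros lo hi Hlo Hhi.
rewrite <- (RInt_ext g); [apply HM; auto | intros; apply E].
Qed.

Lemma is_RInt_R_eq g L L' : is_RInt_R g L -> L = L' -> is_RInt_R g L'.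
Proof. intros H ->; auto. Qed.

Lemma is_RInt_R_plus g h L K : continuous_R g -> continuous_R h ->
  is_RInt_R g L -> is_RInt_R h K -> is_RInt_R (fun x => g x + h x) (L + K).
Proof.
intros Cg Ch Hg Hh eps Heps.
destruct (Hg (eps / 2)) as [M1 H1]; [lra|]. destruct (Hh (eps / 2)) as [M2 H2]; [lra|].
exists (Rmax M1 M2); intros lo hi Hlo Hhi.
generalize (Rmax_l M1 M2) (Rmax_r M1 M2); intros.
assert (E := RInt_plus g h lo hi (continuous_R_ex_RInt _ _ _ Cg) (continuous_R_ex_RInt _ _ _ Ch)).
unfold plus in E; simpl in E; rewrite E.
specialize (H1 lo hi ltac:(lra) ltac:(lra)). specialize (H2 lo hi ltac:(lra) ltac:(lra)).
revert H1 H2; unfold Rabs; repeat destruct Rcase_abs; lra.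
Qed.

Lemma is_RInt_R_scal g c L : continuous_R g ->
  is_RInt_R g L -> is_RInt_R (fun x => c * g x) (c * L).
Proof.
intros Cg Hg eps Heps.
assert (c1 : 0 < Rabs c + 1) by (generalize (Rabs_pos c); lra).
destruct (Hg (eps / (Rabs c + 1))) as [M HM]; [apply Rdiv_lt_0_compat; lra|].
exists M; intros lo hi Hlo Hhi.
assert (E := RInt_scal g lo hi c (continuous_R_ex_RInt _ _ _ Cg)).
unfold scal in E; simpl in E; unfold mult in E; simpl in E; rewrite E.
replace (c * RInt g lo hi - c * L) with (c * (RInt g lo hi - L)) by ring.
rewrite Rabs_mult. specialize (HM lo hi Hlo Hhi).
apply Rle_lt_trans with (Rabs c * (eps / (Rabs c + 1))).
{ apply Rmult_le_compat_l; [apply Rabs_pos | lra]. }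
replace eps with ((Rabs c + 1) * (eps / (Rabs c + 1))) at 2 by (field; lra).
apply Rmult_lt_compat_r; [apply Rdiv_lt_0_compat|]; lra.
Qed.

Lemma is_RInt_R_le g h L K : continuous_R g -> continuous_R h ->
  is_RInt_R g L -> is_RInt_R h K -> (forall x, g x <= h x) -> L <= K.
Proof.
intros Cg Ch Hg Hh Le.
destruct (Rle_or_lt L K) as [|LK]; [auto | exfalso].
destruct (Hg ((L - K) / 2)) as [M1 H1]; [lra|]. destruct (Hh ((L - K) / 2)) as [M2 H2]; [lra|].
set (M := Rmax (Rmax M1 M2) 0).
assert (M1 <= M /\ M2 <= M /\ 0 <= M) as (A1 & A2 & A3).
{ unfold M; generalize (Rmax_l (Rmax M1 M2) 0) (Rmax_r (Rmax M1 M2) 0) (Rmax_l M1 M2) (Rmax_r M1 M2); lra. }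
specialize (H1 (- M) M ltac:(lra) ltac:(lra)). specialize (H2 (- M) M ltac:(lra) ltac:(lra)).
assert (RInt g (- M) M <= RInt h (- M) M) by (apply RInt_le; try apply continuous_R_ex_RInt; auto; lra).
revert H1 H2; unfold Rabs; repeat destruct Rcase_abs; lra.
Qed.

Lemma is_RInt_R_antiderivative g F (Lp Lm : R) :
  continuous_R g -> (forall x, is_derive F x (g x)) ->
  is_lim F p_infty Lp -> is_lim F m_infty Lm -> is_RInt_R g (Lp - Lm).
Proof.
intros Cg D Hp Hm eps Heps.
apply is_lim_spec in Hp; apply is_lim_spec in Hm.
destruct (Hp (mkposreal (eps / 2) ltac:(lra))) as [M1 H1].
destruct (Hm (mkposreal (eps / 2) ltac:(lra))) as [M2 H2]; simpl in *.
exists (Rmax (M1 + 1) (1 - M2)); intros lo hi Hlo Hhi.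
generalize (Rmax_l (M1 + 1) (1 - M2)) (Rmax_r (M1 + 1) (1 - M2)); intros.
replace (RInt g lo hi) with (F hi - F lo).
- specialize (H1 hi ltac:(lra)). specialize (H2 lo ltac:(lra)).
  revert H1 H2; unfold Rabs; repeat destruct Rcase_abs; lra.
- symmetry; apply is_RInt_unique, (@is_RInt_derive R_CompleteNormedModule);
    intros; [apply D | apply Cg].
Qed.

(* Existence of improper integrals through the Cauchy criterion: integrals
   over intervals far out on either side become small. *)
Definition small_tails (g : R -> R) : Prop :=
  forall eps, 0 < eps -> exists M, forall u v,
    ((u <= - M /\ v <= - M) \/ (M <= u /\ M <= v)) -> Rabs (RInt g u v) < eps.

Lemma RInt_Chasles_R g a b c : continuous_R g -> RInt g a c = RInt g a b + RInt g b c.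
Proof. intros Cg; rewrite <- (RInt_Chasles g a b c); try apply continuous_R_ex_RInt; auto. Qed.

Lemma RInt_swap_R g a b : continuous_R g -> RInt g b a = - RInt g a b.
Proof. intros Cg; rewrite <- (opp_RInt_swap g a b); [reflexivity | apply continuous_R_ex_RInt; auto]. Qed.

Lemma is_RInt_R_small_tails g L : continuous_R g -> is_RInt_R g L -> small_tails g.
Proof.
intros Cg H eps Heps. destruct (H (eps / 2)) as [M HM]; [lra|].
set (M' := Rmax M 0).
assert (M <= M' /\ 0 <= M') as [A1 A2] by (unfold M'; split; [apply Rmax_l | apply Rmax_r]).
exists M'; intros u v [[Hu Hv] | [Hu Hv]].
- rewrite (RInt_Chasles_R g u M' v Cg), (RInt_swap_R g v M' Cg).
  assert (B1 := HM u M' ltac:(lra) ltac:(lra)). assert (B2 := HM v M' ltac:(lra) ltac:(lra)).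
  revert B1 B2; unfold Rabs; repeat destruct Rcase_abs; lra.
- rewrite (RInt_Chasles_R g u (- M') v Cg), (RInt_swap_R g (- M') u Cg).
  assert (B1 := HM (- M') u ltac:(lra) ltac:(lra)). assert (B2 := HM (- M') v ltac:(lra) ltac:(lra)).
  revert B1 B2; unfold Rabs; repeat destruct Rcase_abs; lra.
Qed.

Lemma RInt_abs_dominated g h u v : continuous_R g -> continuous_R h ->
  (forall x, Rabs (g x) <= h x) -> Rabs (RInt g u v) <= Rabs (RInt h u v).
Proof.
intros Cg Ch D.
assert (K : forall a b, a <= b -> Rabs (RInt g a b) <= Rabs (RInt h a b)).
{ intros a b ab.
  assert (Ex : ex_RInt (fun x => - h x) a b).
  { apply (ex_RInt_opp h a b), continuous_R_ex_RInt, Ch. }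
  assert (Up : RInt g a b <= RInt h a b).
  { apply RInt_le; try apply continuous_R_ex_RInt; auto.
    intros x _; generalize (D x) (Rle_abs (g x)); lra. }
  assert (Low : RInt (fun x => - h x) a b <= RInt g a b).
  { apply RInt_le; [lra | exact Ex | apply continuous_R_ex_RInt, Cg |].
    intros x _; generalize (D x) (Rle_abs (- g x)); rewrite Rabs_Ropp; lra. }
  assert (E := RInt_opp h a b (continuous_R_ex_RInt _ _ _ Ch)).
  unfold opp in E; simpl in E; rewrite E in Low.
  revert Up Low; unfold Rabs; repeat destruct Rcase_abs; lra. }
destruct (Rle_or_lt u v) as [uv | vu]; [apply K; auto|].
rewrite (RInt_swap_R g v u Cg), (RInt_swap_R h v u Ch), !Rabs_Ropp. apply K; lra.
Qed.

Lemma small_tails_is_RInt_R g : continuous_R g -> small_tails g -> exists L, is_RInt_R g L.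
Proof.
intros Cg T.
set (S := fun n : nat => RInt g (- INR n) (INR n)).
assert (Cc : Cauchy_crit S).
{ intros eps Heps. destruct (T (eps / 2)) as [M HM]; [lra|].
  destruct (INR_archimed 1 M) as [N HN]; [lra|]. rewrite Rmult_1_r in HN.
  exists N; intros n m Hn Hm. unfold R_dist, S.
  apply le_INR in Hn; apply le_INR in Hm.
  rewrite (RInt_Chasles_R g (- INR n) (- INR m) (INR n) Cg),
    (RInt_Chasles_R g (- INR m) (INR m) (INR n) Cg).
  assert (B1 := HM (- INR n) (- INR m) ltac:(left; lra)).
  assert (B2 := HM (INR m) (INR n) ltac:(right; lra)).
  revert B1 B2; unfold Rabs; repeat destruct Rcase_abs; lra. }
destruct (Rcomplete.R_complete S Cc) as [L HL]. exists L.
intros eps Heps. destruct (T (eps / 3)) as [M HM]; [lra|].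
destruct (HL (eps / 3)) as [N HN]; [lra|].
destruct (INR_archimed 1 (Rmax M 0)) as [N2 HN2]; [lra|]. rewrite Rmult_1_r in HN2.
set (n := (N + N2)%nat).
assert (Hn2 : INR N2 <= INR n) by (apply le_INR; unfold n; lia).
assert (M <= INR n /\ 0 <= INR n) as [C1 C2] by (generalize (Rmax_l M 0) (Rmax_r M 0); lra).
exists (INR n); intros lo hi Hlo Hhi.
rewrite (RInt_Chasles_R g lo (- INR n) hi Cg), (RInt_Chasles_R g (- INR n) (INR n) hi Cg).
assert (B1 := HM lo (- INR n) ltac:(left; lra)). assert (B2 := HM (INR n) hi ltac:(right; lra)).
assert (B3 := HN n ltac:(unfold n; lia)). unfold R_dist, S in B3.
revert B1 B2 B3; unfold Rabs; repeat destruct Rcase_abs; lra.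
Qed.

Lemma is_RInt_R_dominated g h L : continuous_R g -> continuous_R h ->
  (forall x, Rabs (g x) <= h x) -> is_RInt_R h L -> exists L', is_RInt_R g L'.
Proof.
intros Cg Ch D H. apply small_tails_is_RInt_R; auto.
intros eps Heps. destruct (is_RInt_R_small_tails h L Ch H eps Heps) as [M HM].
exists M; intros u v P.
eapply Rle_lt_trans; [apply (RInt_abs_dominated g h u v Cg Ch D) | apply HM; auto].
Qed.

Lemma continuous_R_of_derivable f : (forall x, ex_derive f x) -> continuous_R f.
Proof. intros H x; apply (@ex_derive_continuous R_AbsRing R_NormedModule), H. Qed.

Definition gauss_kernel (u : R) : R := exp (- (u * u)).
Definition gauss_primitive (x : R) : R := RInt gauss_kernel 0 x.

Lemma gauss_kernel_continuous : continuous_R gauss_kernel.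
Proof. apply continuous_R_of_derivable; intros x; unfold gauss_kernel; auto_derive; auto. Qed.

Lemma gauss_primitive_derive x : is_derive gauss_primitive x (gauss_kernel x).
Proof.
apply (is_derive_RInt gauss_kernel gauss_primitive 0 x); [|apply gauss_kernel_continuous].
apply filter_forall; intros y.
apply (@RInt_correct R_CompleteNormedModule), continuous_R_ex_RInt, gauss_kernel_continuous.
Qed.

Lemma gauss_primitive_0 : gauss_primitive 0 = 0.
Proof. unfold gauss_primitive; rewrite RInt_point; reflexivity. Qed.

Lemma gauss_primitive_nonneg x : 0 <= x -> 0 <= gauss_primitive x.
Proof.
intros Hx; unfold gauss_primitive; apply RInt_ge_0; auto.
- apply continuous_R_ex_RInt, gauss_kernel_continuous.
- intros; unfold gauss_kernel; left; apply exp_pos.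
Qed.

Lemma gauss_primitive_odd x : gauss_primitive (- x) = - gauss_primitive x.
Proof.
unfold gauss_primitive.
assert (E := RInt_comp_lin gauss_kernel (-1) 0 0 x).
replace (-1 * 0 + 0) with 0 in E by ring. replace (-1 * x + 0) with (- x) in E by ring.
rewrite <- E by (apply continuous_R_ex_RInt, gauss_kernel_continuous).
change (- RInt gauss_kernel 0 x) with (opp (RInt gauss_kernel 0 x)).
rewrite <- (RInt_opp gauss_kernel 0 x) by (apply continuous_R_ex_RInt, gauss_kernel_continuous).
apply RInt_ext; intros y _. unfold scal, opp; simpl; unfold mult; simpl; unfold gauss_kernel.
replace (- ((-1 * y + 0) * (-1 * y + 0))) with (- (y * y)) by ring. ring.
Qed.

(* The Gaussian integral: E(x) -> sqrt(pi)/2, from E(x)^2 -> pi/4 and E >= 0. *)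
Lemma gauss_primitive_p_infty : is_lim gauss_primitive p_infty (sqrt PI / 2).
Proof.
apply is_lim_spec; intros eps.
set (r := sqrt PI / 2).
assert (r0 : 0 < r) by (unfold r; generalize (sqrt_lt_R0 PI PI_RGT_0); lra).
assert (rr : r * r = PI / 4).
{ unfold r. replace (sqrt PI / 2 * (sqrt PI / 2)) with (sqrt PI * sqrt PI / 4) by field.
  rewrite sqrt_sqrt; [reflexivity | generalize PI_RGT_0; lra]. }
assert (D : forall x, derivable_pt_lim gauss_primitive x (exp (- (x * x)))).
{ intros x; apply is_derive_Reals, gauss_primitive_derive. }
destruct (GaussianIntegral.antiderivative_sqr_limit gauss_primitive D gauss_primitive_0 (eps * r))
  as [M HM]; [apply Rmult_lt_0_compat; [apply cond_pos | auto]|].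
exists (Rmax M 0); intros x Hx.
generalize (Rmax_l M 0) (Rmax_r M 0); intros.
specialize (HM x ltac:(lra)). rewrite <- rr in HM.
assert (G0 := gauss_primitive_nonneg x ltac:(lra)).
replace (gauss_primitive x * gauss_primitive x - r * r)
  with ((gauss_primitive x - r) * (gauss_primitive x + r)) in HM by ring.
rewrite Rabs_mult, (Rabs_pos_eq (gauss_primitive x + r)) in HM by lra.
apply Rmult_lt_reg_r with r; auto.
apply Rle_lt_trans with (Rabs (gauss_primitive x - r) * (gauss_primitive x + r)); auto.
apply Rmult_le_compat_l; [apply Rabs_pos | lra].
Qed.

Lemma gauss_primitive_m_infty : is_lim gauss_primitive m_infty (- (sqrt PI / 2)).
Proof.
apply (is_lim_ext (fun x => - gauss_primitive (- x))).
{ intros x; rewrite gauss_primitive_odd; ring. }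
apply (is_lim_opp (fun x => gauss_primitive (- x)) m_infty (sqrt PI / 2)).
apply (is_lim_comp gauss_primitive Ropp m_infty (sqrt PI / 2) p_infty gauss_primitive_p_infty).
- apply (is_lim_opp (fun x => x) m_infty m_infty), is_lim_id.
- exists 0; intros; discriminate.
Qed.

Lemma sqrt_2PI_pos s : 0 < s -> 0 < sqrt (2 * PI * s).
Proof. intros; apply sqrt_lt_R0; generalize PI_RGT_0; nra. Qed.

Lemma gauss_density_pos c s x : 0 < s -> 0 < gauss_density c s x.
Proof.
intros; unfold gauss_density; apply Rdiv_lt_0_compat; [apply exp_pos | apply sqrt_2PI_pos; auto].
Qed.

Lemma gauss_density_derive c s x : 0 < s ->
  is_derive (gauss_density c s) x (- (x - c) / s * gauss_density c s x).
Proof.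
intros hs. assert (P := sqrt_2PI_pos s hs). unfold gauss_density.
auto_derive; [lra|].
replace (- ((x + - c) * ((x + - c) * 1)) * / (2 * s)) with (- (x - c) ^ 2 / (2 * s)) by (field; lra).
field; lra.
Qed.

(* Distribution function of gamma_{c,s}, shifted by 1/2 so that it is odd
   about c. *)
Definition gauss_cdf (c s x : R) : R := gauss_primitive ((x - c) / sqrt (2 * s)) / sqrt PI.

Lemma gauss_cdf_derive c s x : 0 < s -> is_derive (gauss_cdf c s) x (gauss_density c s x).
Proof.
intros hs.
assert (k0 : 0 < sqrt 2) by (apply sqrt_lt_R0; lra).
assert (s0 : 0 < sqrt s) by (apply sqrt_lt_R0; lra).
assert (p0 : 0 < sqrt PI) by (apply sqrt_lt_R0, PI_RGT_0).
assert (S1 : sqrt (2 * PI * s) = sqrt 2 * sqrt PI * sqrt s).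
{ rewrite !sqrt_mult; try lra; generalize PI_RGT_0; nra. }
assert (S2 : sqrt (2 * s) = sqrt 2 * sqrt s) by (rewrite sqrt_mult; lra).
assert (Dlin : is_derive (fun y => (y - c) / sqrt (2 * s)) x (/ sqrt (2 * s))).
{ rewrite S2; auto_derive; [nra | field; nra]. }
assert (D := is_derive_comp gauss_primitive _ x _ _ (gauss_primitive_derive _) Dlin).
apply (is_derive_scal _ x (/ sqrt PI)) in D.
replace (gauss_density c s x)
  with (/ sqrt PI * scal (/ sqrt (2 * s)) (gauss_kernel ((x - c) / sqrt (2 * s)))).
- refine (is_derive_ext _ _ x _ _ D). intros y; unfold gauss_cdf, scal; simpl; unfold mult; simpl; unfold Rdiv; ring.
- unfold gauss_kernel, gauss_density.
  change (scal (/ sqrt (2 * s)) ?e) with (/ sqrt (2 * s) * e).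
  replace (- ((x - c) / sqrt (2 * s) * ((x - c) / sqrt (2 * s)))) with (- (x - c) ^ 2 / (2 * s)).
  2:{ rewrite S2. replace ((x - c) / (sqrt 2 * sqrt s) * ((x - c) / (sqrt 2 * sqrt s)))
        with ((x - c) ^ 2 / ((sqrt 2 * sqrt 2) * (sqrt s * sqrt s))) by (field; lra).
      rewrite !sqrt_sqrt by lra. field; lra. }
  rewrite S1, S2. field; lra.
Qed.

Lemma gauss_cdf_limits c s : 0 < s ->
  is_lim (gauss_cdf c s) p_infty (1 / 2) /\ is_lim (gauss_cdf c s) m_infty (- (1 / 2)).
Proof.
intros hs.
assert (k0 : 0 < sqrt (2 * s)) by (apply sqrt_lt_R0; lra).
assert (p0 : 0 < sqrt PI) by (apply sqrt_lt_R0, PI_RGT_0).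
assert (Aff : is_lim (fun x => (x - c) / sqrt (2 * s)) p_infty p_infty /\
              is_lim (fun x => (x - c) / sqrt (2 * s)) m_infty m_infty).
{ split; apply is_lim_spec; intros M; exists (M * sqrt (2 * s) + c); intros x Hx;
    apply Rmult_lt_reg_r with (sqrt (2 * s)); auto;
    unfold Rdiv; rewrite Rmult_assoc, Rinv_l; lra. }
assert (Ext : forall l L, is_lim (fun x => gauss_primitive ((x - c) / sqrt (2 * s)) * / sqrt PI) l L ->
  is_lim (gauss_cdf c s) l L) by (intros; eapply is_lim_ext; [intros; reflexivity | eauto]).
split.
- assert (H := is_lim_comp gauss_primitive _ p_infty _ p_infty gauss_primitive_p_infty (proj1 Aff)
    ltac:(exists 0; intros; discriminate)).
  apply (is_lim_scal_r _ (/ sqrt PI)) in H.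
  apply Ext; replace (1 / 2) with (sqrt PI / 2 * / sqrt PI) by (field; lra); exact H.
- assert (H := is_lim_comp gauss_primitive _ m_infty _ m_infty gauss_primitive_m_infty (proj2 Aff)
    ltac:(exists 0; intros; discriminate)).
  apply (is_lim_scal_r _ (/ sqrt PI)) in H.
  apply Ext; replace (- (1 / 2)) with (- (sqrt PI / 2) * / sqrt PI) by (field; lra); exact H.
Qed.

Lemma exp_neg_mul_le y : 0 <= y -> exp (- y) * (1 + y) <= 1.
Proof.
intros hy. assert (E := exp_ineq1_le y). assert (P := exp_pos y).
rewrite exp_Ropp. apply Rmult_le_reg_l with (exp y); auto.
rewrite <- Rmult_assoc, Rinv_r by lra. lra.
Qed.

Lemma gauss_density_weighted_bound c s x : 0 < s ->
  (1 + (x - c) ^ 2 / (2 * s)) * gauss_density c s x <= / sqrt (2 * PI * s).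
Proof.
intros hs. assert (P := sqrt_2PI_pos s hs).
assert (y0 : 0 <= (x - c) ^ 2 / (2 * s)) by (apply Rdiv_le_0_compat; [apply pow2_ge_0 | lra]).
assert (B := exp_neg_mul_le _ y0).
unfold gauss_density, Rdiv at 2.
replace (- (x - c) ^ 2 / (2 * s)) with (- ((x - c) ^ 2 / (2 * s))) by (field; lra).
rewrite <- Rmult_assoc, (Rmult_comm _ (exp _)).
rewrite <- (Rmult_1_l (/ sqrt (2 * PI * s))) at 2.
apply Rmult_le_compat_r; [left; apply Rinv_0_lt_compat |]; lra.
Qed.

Lemma is_lim_0_of_decay (F : R -> R) c K :
  (forall x, Rabs (F x) * Rabs (x - c) <= K) -> is_lim F p_infty 0 /\ is_lim F m_infty 0.
Proof.
intros H.
assert (K0 : 0 <= K).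
{ specialize (H c); rewrite Rminus_diag, Rabs_R0, Rmult_0_r in H; auto. }
assert (Main : forall (eps : posreal) x, Rabs (x - c) > K / eps -> Rabs (F x - 0) < eps).
{ intros eps x Hx. rewrite Rminus_0_r. assert (ep := cond_pos eps).
  assert (Kx : K < eps * Rabs (x - c)).
  { apply Rmult_lt_compat_l with (r := eps) in Hx; auto.
    replace (eps * (K / eps)) with K in Hx by (field; lra). lra. }
  assert (xc : 0 < Rabs (x - c))
    by (apply Rle_lt_trans with (K / eps); [apply Rdiv_le_0_compat |]; lra).
  apply Rmult_lt_reg_r with (Rabs (x - c)); auto. specialize (H x). lra. }
split; apply is_lim_spec; intros eps.
- exists (Rabs c + K / eps); intros x Hx. apply Main.
  generalize (Rle_abs c) (Rle_abs (x - c)); lra.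
- exists (- Rabs c - K / eps); intros x Hx. apply Main.
  generalize (Rle_abs (- c)) (Rle_abs (- (x - c))); rewrite Rabs_Ropp, Rabs_Ropp; lra.
Qed.

Lemma gauss_density_limits c s : 0 < s ->
  is_lim (gauss_density c s) p_infty 0 /\ is_lim (gauss_density c s) m_infty 0.
Proof.
intros hs. apply (is_lim_0_of_decay _ c ((1 + 2 * s) / sqrt (2 * PI * s))); intros x.
assert (P := sqrt_2PI_pos s hs). assert (G := gauss_density_pos c s x hs).
assert (B := gauss_density_weighted_bound c s x hs).
assert (A : Rabs (x - c) <= (1 + 2 * s) * (1 + (x - c) ^ 2 / (2 * s))).
{ assert (Q : Rabs (x - c) <= 1 + (x - c) ^ 2).
  { generalize (x - c); intro z; unfold Rabs; destruct Rcase_abs; nra. }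
  replace ((1 + 2 * s) * (1 + (x - c) ^ 2 / (2 * s)))
    with (1 + (x - c) ^ 2 + 2 * s + (x - c) ^ 2 / (2 * s)) by (field; lra).
  assert (0 <= (x - c) ^ 2 / (2 * s)) by (apply Rdiv_le_0_compat; [apply pow2_ge_0 | lra]).
  lra. }
rewrite Rabs_pos_eq by lra. unfold Rdiv.
apply Rle_trans with (gauss_density c s x * ((1 + 2 * s) * (1 + (x - c) ^ 2 / (2 * s)))).
- apply Rmult_le_compat_l; lra.
- rewrite <- Rmult_assoc, (Rmult_comm _ (1 + 2 * s)), Rmult_assoc, (Rmult_comm (gauss_density c s x)).
  apply Rmult_le_compat_l; lra.
Qed.

Lemma gauss_first_moment_limits c s : 0 < s ->
  is_lim (fun x => (x - c) * gauss_density c s x) p_infty 0 /\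
  is_lim (fun x => (x - c) * gauss_density c s x) m_infty 0.
Proof.
intros hs. apply (is_lim_0_of_decay _ c (2 * s / sqrt (2 * PI * s))); intros x.
assert (P := sqrt_2PI_pos s hs). assert (G := gauss_density_pos c s x hs).
assert (B := gauss_density_weighted_bound c s x hs).
rewrite Rabs_mult, (Rabs_pos_eq (gauss_density c s x)) by lra.
replace (Rabs (x - c) * gauss_density c s x * Rabs (x - c))
  with (2 * s * ((x - c) ^ 2 / (2 * s) * gauss_density c s x)).
2:{ rewrite <- (pow2_abs (x - c)); field; lra. }
unfold Rdiv at 2; apply Rmult_le_compat_l; [lra |].
assert (0 <= gauss_density c s x) by lra. nra.
Qed.

(* A quadratic polynomial in (x - c) times the density of gamma_{c,s}: all the
   integrands of the proof are sums of such functions. *)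
Definition gauss_quadratic (c s k0 k1 k2 x : R) : R :=
  (k0 + k1 * (x - c) + k2 * (x - c) ^ 2) * gauss_density c s x.

Lemma gauss_quadratic_continuous c s k0 k1 k2 : 0 < s ->
  continuous_R (gauss_quadratic c s k0 k1 k2).
Proof.
intros hs. apply continuous_R_of_derivable; intros x.
assert (P := sqrt_2PI_pos s hs).
unfold gauss_quadratic, gauss_density; auto_derive; lra.
Qed.

Lemma gauss_monomials_continuous c s : 0 < s ->
  continuous_R (gauss_density c s) /\
  continuous_R (fun x => (x - c) * gauss_density c s x) /\
  continuous_R (fun x => (x - c) ^ 2 * gauss_density c s x).
Proof.
intros hs; assert (P := sqrt_2PI_pos s hs).
split; [| split]; apply continuous_R_of_derivable; intros x;
  unfold gauss_density; auto_derive; lra.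
Qed.

Lemma gauss_moments c s : 0 < s ->
  is_RInt_R (gauss_density c s) 1 /\
  is_RInt_R (fun x => (x - c) * gauss_density c s x) 0 /\
  is_RInt_R (fun x => (x - c) ^ 2 * gauss_density c s x) s.
Proof.
intros hs.
destruct (gauss_cdf_limits c s hs) as [Cp Cm].
destruct (gauss_density_limits c s hs) as [Dp Dm].
destruct (gauss_first_moment_limits c s hs) as [Mp Mm].
destruct (gauss_monomials_continuous c s hs) as (Cont0 & Cont1 & Cont2).
split; [| split].
- (* antiderivative: the distribution function *)
  apply (is_RInt_R_eq _ (1 / 2 - - (1 / 2))); [| field].
  apply (is_RInt_R_antiderivative _ (gauss_cdf c s)); auto.
  intros; apply gauss_cdf_derive; auto.
- (* antiderivative: - s gamma_{c,s} *)
  apply (is_RInt_R_eq _ (- s * 0 - - s * 0)); [| ring].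
  apply (is_RInt_R_antiderivative _ (fun x => - s * gauss_density c s x));
    [exact Cont1 | | exact (is_lim_scal_l _ (- s) _ _ Dp) | exact (is_lim_scal_l _ (- s) _ _ Dm)].
  intros x.
  replace ((x - c) * gauss_density c s x) with (- s * (- (x - c) / s * gauss_density c s x))
    by (field; lra).
  apply is_derive_scal, gauss_density_derive; auto.
- (* antiderivative: s F_{c,s} - s (x - c) gamma_{c,s}, F_{c,s} = gauss_cdf *)
  apply (is_RInt_R_eq _ ((s * (1 / 2) + - s * 0) - (s * (- (1 / 2)) + - s * 0))); [| field].
  apply (is_RInt_R_antiderivative _
    (fun x => s * gauss_cdf c s x + - s * ((x - c) * gauss_density c s x))); [exact Cont2 | | |].
  + intros x.
    assert (Dlin : is_derive (fun y => y - c) x 1) by (auto_derive; reflexivity).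
    assert (D := is_derive_plus _ _ x _ _
      (is_derive_scal _ x s _ (gauss_cdf_derive c s x hs))
      (is_derive_scal _ x (- s) _
        (is_derive_mult _ _ x _ _ Dlin (gauss_density_derive c s x hs) Rmult_comm))).
    unfold plus, mult in D; simpl in D.
    replace ((x - c) ^ 2 * gauss_density c s x) with
      (s * gauss_density c s x
       + - s * (1 * gauss_density c s x + (x - c) * (- (x - c) / s * gauss_density c s x)))
      by (field; lra).
    exact D.
  + exact (is_lim_plus' _ _ _ _ _ (is_lim_scal_l _ s _ _ Cp) (is_lim_scal_l _ (- s) _ _ Mp)).
  + exact (is_lim_plus' _ _ _ _ _ (is_lim_scal_l _ s _ _ Cm) (is_lim_scal_l _ (- s) _ _ Mm)).
Qed.

Lemma gauss_quadratic_integral c s k0 k1 k2 : 0 < s ->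
  is_RInt_R (gauss_quadratic c s k0 k1 k2) (k0 + k2 * s).
Proof.
intros hs.
destruct (gauss_moments c s hs) as (M0 & M1 & M2).
destruct (gauss_monomials_continuous c s hs) as (C0 & C1 & C2).
apply (is_RInt_R_eq _ (k0 * 1 + k1 * 0 + k2 * s)); [| ring].
apply (is_RInt_R_ext (fun x => k0 * gauss_density c s x + k1 * ((x - c) * gauss_density c s x)
  + k2 * ((x - c) ^ 2 * gauss_density c s x))).
{ intros; unfold gauss_quadratic; ring. }
apply is_RInt_R_plus; [| apply continuous_R_scal; auto | | apply is_RInt_R_scal; auto].
- apply continuous_R_plus; apply continuous_R_scal; auto.
- apply is_RInt_R_plus; try apply continuous_R_scal; auto; apply is_RInt_R_scal; auto.
Qed.

Lemma weighted_mean_sqr_le w1 w2 q1 q2 : 0 <= w1 -> 0 <= w2 -> 0 < w1 + w2 ->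
  (w1 * q1 + w2 * q2) * (w1 * q1 + w2 * q2) * / (w1 + w2) <= w1 * q1 ^ 2 + w2 * q2 ^ 2.
Proof.
intros h1 h2 h12.
apply Rmult_le_reg_r with (w1 + w2); [lra |].
rewrite Rmult_assoc, Rinv_l, Rmult_1_r by lra.
assert (0 <= w1 * w2 * (q1 - q2) ^ 2) by (apply Rmult_le_pos; [nra | apply pow2_ge_0]).
nra.
Qed.

Lemma xlnx_0 : xlnx 0 = 0.
Proof. unfold xlnx; destruct Req_EM_T; [reflexivity | congruence]. Qed.

Lemma xlnx_pos w : 0 < w -> xlnx w = w * ln w.
Proof. intros; unfold xlnx; destruct Req_EM_T; [lra | reflexivity]. Qed.

Lemma ln_lower_bound_weighted w u f : 0 <= w -> 0 < u -> w * u <= f ->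
  w * ln u + xlnx w <= w * ln f.
Proof.
intros hw hu hle.
destruct (Req_dec w 0) as [-> | wn0].
- rewrite xlnx_0; lra.
- rewrite xlnx_pos by lra.
  assert (Hl : ln (w * u) <= ln f) by (apply ln_le; auto; apply Rmult_lt_0_compat; lra).
  rewrite ln_mult in Hl by lra.
  replace (w * ln u + w * ln w) with (w * (ln w + ln u)) by ring.
  apply Rmult_le_compat_l; lra.
Qed.

(* The logarithm of a convex combination lies between the logarithms of the
   two points. *)
Lemma ln_convex_comb_abs_le t u v : 0 < u -> 0 < v -> 0 <= t <= 1 ->
  Rabs (ln ((1 - t) * u + t * v)) <= Rabs (ln u) + Rabs (ln v).
Proof.
intros hu hv ht. set (f := (1 - t) * u + t * v).
assert (Bnd : Rmin u v <= f <= Rmax u v) by (unfold f, Rmin, Rmax; destruct Rle_dec; split; nra).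
assert (m0 : 0 < Rmin u v) by (unfold Rmin; destruct Rle_dec; lra).
assert (L1 : ln (Rmin u v) <= ln f) by (apply ln_le; lra).
assert (L2 : ln f <= ln (Rmax u v)) by (apply ln_le; lra).
assert (A1 : Rabs (ln (Rmin u v)) <= Rabs (ln u) + Rabs (ln v))
  by (unfold Rmin; destruct Rle_dec; generalize (Rabs_pos (ln u)) (Rabs_pos (ln v)); lra).
assert (A2 : Rabs (ln (Rmax u v)) <= Rabs (ln u) + Rabs (ln v))
  by (unfold Rmax; destruct Rle_dec; generalize (Rabs_pos (ln u)) (Rabs_pos (ln v)); lra).
revert L1 L2 A1 A2; generalize (ln (Rmin u v)) (ln (Rmax u v)) (ln f).
intros p q r L1 L2 A1 A2. unfold Rabs in *; repeat destruct Rcase_abs; lra.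
Qed.

Lemma ln_1_plus_ge v : 0 <= v -> v - v ^ 2 / 2 <= ln (1 + v).
Proof.
intros hv.
destruct (Req_dec v 0) as [-> | vn0]; [rewrite Rplus_0_r, ln_1; lra |].
set (k := fun w => ln (1 + w) - w + w ^ 2 / 2).
assert (D : forall w, 0 <= w -> is_derive k w (w ^ 2 / (1 + w)))
  by (intros w hw; unfold k; auto_derive; [lra | field; lra]).
destruct (MVT_gen k 0 v (fun w => w ^ 2 / (1 + w))) as [c [Hc E]].
- intros x Hx. apply D. rewrite Rmin_left in Hx by lra. lra.
- intros x Hx. rewrite Rmin_left in Hx by lra. apply derivable_continuous_pt.
  exists (x ^ 2 / (1 + x)). apply is_derive_Reals, D; lra.
- rewrite Rmin_left, Rmax_right in Hc by lra.
  unfold k in E. rewrite Rplus_0_r, ln_1 in E.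
  assert (0 <= c ^ 2 / (1 + c)) by (apply Rdiv_le_0_compat; [apply pow2_ge_0 | lra]).
  assert (0 <= c ^ 2 / (1 + c) * (v - 0)) by (apply Rmult_le_pos; lra).
  lra.
Qed.

Lemma ln_sqrt s : 0 < s -> ln (sqrt s) = ln s / 2.
Proof.
intros hs. assert (P := sqrt_lt_R0 s hs).
rewrite <- (sqrt_sqrt s) at 2 by lra. rewrite ln_mult by lra. field.
Qed.

Lemma variance_defect_le s : 0 < s <= 1 ->
  / (2 * s) - / 2 + ln s / 2 <= / 4 * (/ s - 1) ^ 2.
Proof.
intros [hs hs1].
set (v := / s - 1).
assert (v0 : 0 <= v).
{ unfold v. assert (1 <= / s) by (rewrite <- Rinv_1; apply Rinv_le_contravar; lra). lra. }
assert (L := ln_1_plus_ge v v0).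
assert (E : ln s = - ln (1 + v)).
{ unfold v. replace (1 + (/ s - 1)) with (/ s) by ring. rewrite ln_Rinv; [ring | lra]. }
rewrite E. replace (/ (2 * s)) with ((1 + v) / 2) by (unfold v; field; lra).
lra.
Qed.

Definition log_gauss_ratio (c s x : R) : R := - (x - c) ^ 2 / (2 * s) + x ^ 2 / 2 - ln s / 2.

Lemma ln_gauss_ratio c s x : 0 < s ->
  ln (gauss_density c s x / gauss_density 0 1 x) = log_gauss_ratio c s x.
Proof.
intros hs. assert (P1 := sqrt_2PI_pos s hs). assert (P0 := sqrt_2PI_pos 1 ltac:(lra)).
assert (Pi := PI_RGT_0).
unfold gauss_density, log_gauss_ratio.
rewrite ln_div, !ln_div, !ln_exp, !ln_sqrt, !ln_mult; try apply exp_pos; try nra;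
  try (apply Rdiv_lt_0_compat; [apply exp_pos | auto]).
rewrite ln_1. field; lra.
Qed.

Lemma log_gauss_ratio_expand c s x : 0 < s ->
  log_gauss_ratio c s x = (c ^ 2 / 2 - ln s / 2) + c * (x - c) + (/ 2 - / (2 * s)) * (x - c) ^ 2.
Proof. intros hs; unfold log_gauss_ratio; field; lra. Qed.

Lemma log_gauss_ratio_abs_le c s x : 0 < s ->
  Rabs (log_gauss_ratio c s x) <= c ^ 2 / s + Rabs (ln s) / 2 + (/ s + / 2) * x ^ 2.
Proof.
intros hs. unfold log_gauss_ratio. apply Rabs_le.
assert (H1 : (x - c) ^ 2 / (2 * s) <= x ^ 2 / s + c ^ 2 / s).
{ replace (x ^ 2 / s + c ^ 2 / s) with (2 * (x ^ 2 + c ^ 2) / (2 * s)) by (field; lra).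
  unfold Rdiv; apply Rmult_le_compat_r; [left; apply Rinv_0_lt_compat; lra |].
  assert (0 <= (x + c) ^ 2) by apply pow2_ge_0. nra. }
assert (H2 : 0 <= (x - c) ^ 2 / (2 * s)) by (apply Rdiv_le_0_compat; [apply pow2_ge_0 | lra]).
assert (H3 : 0 <= x ^ 2 / s) by (apply Rdiv_le_0_compat; [apply pow2_ge_0 | lra]).
assert (H4 : 0 <= c ^ 2 / s) by (apply Rdiv_le_0_compat; [apply pow2_ge_0 | lra]).
assert (H5 : 0 <= x ^ 2) by apply pow2_ge_0.
assert (H6 := Rle_abs (ln s)). assert (H7 := Rle_abs (- ln s)). rewrite Rabs_Ropp in H7.
replace ((/ s + / 2) * x ^ 2) with (x ^ 2 / s + x ^ 2 / 2) by (field; lra).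
split; lra.
Qed.

(* A function A + B x^2 against gamma_{c,s} is dominated by a Gaussian
   quadratic, since x^2 <= 2 (x - c)^2 + 2 c^2. *)
Lemma gauss_quadratic_dominates c s A B x : 0 < s -> 0 <= B ->
  (A + B * x ^ 2) * gauss_density c s x <= gauss_quadratic c s (A + 2 * B * c ^ 2) 0 (2 * B) x.
Proof.
intros hs hB. unfold gauss_quadratic.
apply Rmult_le_compat_r; [left; apply gauss_density_pos; auto |].
assert (0 <= (x - 2 * c) ^ 2) by apply pow2_ge_0. nra.
Qed.

(* Logarithmic derivative of d gamma_{c,s} / d gamma. *)
Definition log_ratio_slope (s c x : R) : R := x - (x - c) / s.

Definition score_numerator (a b s t x : R) : R :=
  (1 - t) * (log_ratio_slope s a x * gauss_density a s x)
  + t * (log_ratio_slope s b x * gauss_density b s x).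

Definition rel_density_derivative (a b s t x : R) : R :=
  score_numerator a b s t x / gauss_density 0 1 x.

Definition fisher_integrand (a b s t x : R) : R :=
  (rel_density_derivative a b s t x / rel_density a b s t x) ^ 2 * mixture_density a b s t x.

Definition entropy_integrand (a b s t x : R) : R :=
  ln (rel_density a b s t x) * mixture_density a b s t x.

(* Gaussian quadratics bounding them: the Fisher integrand from above by
   convexity of the square, the entropy integrand from below since
   f >= (1-t) d gamma_{a,s} / d gamma (and similarly for b), and the absolute
   value of the entropy integrand by crude bounds on the logarithms. *)
Definition fisher_majorant (a b s t x : R) : R :=
  gauss_quadratic a s ((1 - t) * a ^ 2) ((1 - t) * (2 * a * (1 - / s))) ((1 - t) * (1 - / s) ^ 2) x
  + gauss_quadratic b s (t * b ^ 2) (t * (2 * b * (1 - / s))) (t * (1 - / s) ^ 2) x.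

Definition entropy_minorant (a b s t x : R) : R :=
  gauss_quadratic a s ((1 - t) * (a ^ 2 / 2 - ln s / 2) + xlnx (1 - t)) ((1 - t) * a)
    ((1 - t) * (/ 2 - / (2 * s))) x
  + gauss_quadratic b s (t * (b ^ 2 / 2 - ln s / 2) + xlnx t) (t * b) (t * (/ 2 - / (2 * s))) x.

Definition entropy_majorant (a b s x : R) : R :=
  let A := (a ^ 2 + b ^ 2) / s + Rabs (ln s) in
  let B := 2 / s + 1 in
  gauss_quadratic a s (A + 2 * B * a ^ 2) 0 (2 * B) x
  + gauss_quadratic b s (A + 2 * B * b ^ 2) 0 (2 * B) x.

Lemma gauss_quadratic_sum_integral a b s k0 k1 k2 l0 l1 l2 : 0 < s ->
  continuous_R (fun x => gauss_quadratic a s k0 k1 k2 x + gauss_quadratic b s l0 l1 l2 x) /\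
  is_RInt_R (fun x => gauss_quadratic a s k0 k1 k2 x + gauss_quadratic b s l0 l1 l2 x)
    (k0 + k2 * s + (l0 + l2 * s)).
Proof.
intros hs; split.
- apply continuous_R_plus; apply gauss_quadratic_continuous; auto.
- apply is_RInt_R_plus; try apply gauss_quadratic_continuous; auto;
    apply gauss_quadratic_integral; auto.
Qed.

Section Mixture.
Variables a b s t : R.
Hypothesis hs : 0 < s.
Hypothesis ht : 0 <= t <= 1.

Lemma mixture_density_pos x : 0 < mixture_density a b s t x.
Proof.
unfold mixture_density.
assert (P1 := gauss_density_pos a s x hs). assert (P2 := gauss_density_pos b s x hs).
destruct (Req_dec t 1) as [-> | tn1]; [nra |].
assert (0 < (1 - t) * gauss_density a s x) by (apply Rmult_lt_0_compat; lra). nra.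
Qed.

Lemma rel_density_pos x : 0 < rel_density a b s t x.
Proof.
unfold rel_density; apply Rdiv_lt_0_compat;
  [apply mixture_density_pos | apply gauss_density_pos; lra].
Qed.

Lemma rel_density_split x : rel_density a b s t x =
  (1 - t) * (gauss_density a s x / gauss_density 0 1 x)
  + t * (gauss_density b s x / gauss_density 0 1 x).
Proof.
assert (P0 := gauss_density_pos 0 1 x ltac:(lra)).
unfold rel_density, mixture_density. field. lra.
Qed.

Lemma rel_density_derive x :
  derivable_pt_lim (rel_density a b s t) x (rel_density_derivative a b s t x).
Proof.
apply is_derive_Reals.
assert (P0 := gauss_density_pos 0 1 x ltac:(lra)).
assert (D := is_derive_div _ _ x _ _
  (is_derive_plus _ _ x _ _ (is_derive_scal _ x (1 - t) _ (gauss_density_derive a s x hs))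
                            (is_derive_scal _ x t _ (gauss_density_derive b s x hs)))
  (gauss_density_derive 0 1 x ltac:(lra)) ltac:(lra)).
unfold plus, scal in D; simpl in D; unfold mult in D; simpl in D.
replace (rel_density_derivative a b s t x) with
  ((((1 - t) * (- (x - a) / s * gauss_density a s x) + t * (- (x - b) / s * gauss_density b s x))
     * gauss_density 0 1 x
   - ((1 - t) * gauss_density a s x + t * gauss_density b s x) * (- (x - 0) / 1 * gauss_density 0 1 x))
   / gauss_density 0 1 x ^ 2).
- exact D.
- unfold rel_density_derivative, score_numerator, log_ratio_slope. field. lra.
Qed.

Lemma mixture_density_derivable x : ex_derive (mixture_density a b s t) x.
Proof. unfold mixture_density, gauss_density; auto_derive; auto. Qed.

Lemma fisher_integrand_eq x : fisher_integrand a b s t x =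
  score_numerator a b s t x * score_numerator a b s t x * / mixture_density a b s t x.
Proof.
assert (P0 := gauss_density_pos 0 1 x ltac:(lra)). assert (M := mixture_density_pos x).
unfold fisher_integrand, rel_density_derivative, rel_density. field. lra.
Qed.

Lemma fisher_integrand_continuous : continuous_R (fisher_integrand a b s t).
Proof.
apply continuous_R_of_derivable; intros x.
apply (ex_derive_ext (fun y => score_numerator a b s t y * score_numerator a b s t y
  * / mixture_density a b s t y)); [intros; symmetry; apply fisher_integrand_eq |].
assert (DN : ex_derive (score_numerator a b s t) x).
{ unfold score_numerator, log_ratio_slope, gauss_density; auto_derive; auto. }
apply ex_derive_mult; [apply ex_derive_mult; exact DN |].
apply ex_derive_inv; [apply mixture_density_derivable |].
apply Rgt_not_eq, mixture_density_pos.
Qed.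

(* Cauchy-Schwarz: N^2 / mu <= (1-t) q_a^2 gamma_{a,s} + t q_b^2 gamma_{b,s}. *)
Lemma fisher_integrand_bounds x :
  0 <= fisher_integrand a b s t x <= fisher_majorant a b s t x.
Proof.
rewrite fisher_integrand_eq. assert (M := mixture_density_pos x).
assert (P1 := gauss_density_pos a s x hs). assert (P2 := gauss_density_pos b s x hs).
split.
- apply Rmult_le_pos; [apply Rle_0_sqr | left; apply Rinv_0_lt_compat; lra].
- replace (fisher_majorant a b s t x) with
    ((1 - t) * gauss_density a s x * log_ratio_slope s a x ^ 2
     + t * gauss_density b s x * log_ratio_slope s b x ^ 2)
    by (unfold fisher_majorant, gauss_quadratic, log_ratio_slope; field; lra).
  replace (score_numerator a b s t x) with
    ((1 - t) * gauss_density a s x * log_ratio_slope s a x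
     + t * gauss_density b s x * log_ratio_slope s b x) by (unfold score_numerator; ring).
  apply weighted_mean_sqr_le; try apply Rmult_le_pos; try lra.
  exact M.
Qed.

Lemma entropy_integrand_continuous : continuous_R (entropy_integrand a b s t).
Proof.
apply continuous_R_of_derivable; intros x.
apply ex_derive_mult; [| apply mixture_density_derivable].
eexists; apply (is_derive_comp ln (rel_density a b s t)).
- apply is_derive_Reals, derivable_pt_lim_ln, rel_density_pos.
- apply is_derive_Reals, rel_density_derive.
Qed.

(* ln f >= ln((1-t) d gamma_{a,s}/d gamma), weighted by (1-t) gamma_{a,s},
   and likewise for b. *)
Lemma entropy_integrand_ge x : entropy_minorant a b s t x <= entropy_integrand a b s t x.
Proof.
assert (P0 := gauss_density_pos 0 1 x ltac:(lra)).
assert (P1 := gauss_density_pos a s x hs). assert (P2 := gauss_density_pos b s x hs).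
assert (R1 : 0 < gauss_density a s x / gauss_density 0 1 x) by (apply Rdiv_lt_0_compat; auto).
assert (R2 : 0 < gauss_density b s x / gauss_density 0 1 x) by (apply Rdiv_lt_0_compat; auto).
assert (Ha := ln_lower_bound_weighted (1 - t) _ (rel_density a b s t x) ltac:(lra) R1
  ltac:(rewrite rel_density_split; nra)).
assert (Hb := ln_lower_bound_weighted t _ (rel_density a b s t x) ltac:(lra) R2
  ltac:(rewrite rel_density_split; nra)).
rewrite ln_gauss_ratio, log_gauss_ratio_expand in Ha, Hb by auto.
apply (Rmult_le_compat_r (gauss_density a s x)) in Ha; [| lra].
apply (Rmult_le_compat_r (gauss_density b s x)) in Hb; [| lra].
unfold entropy_minorant, entropy_integrand, gauss_quadratic, mixture_density.
lra.
Qed.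

(* |ln f| <= |ln d gamma_{a,s}/d gamma| + |ln d gamma_{b,s}/d gamma|, which
   grows at most quadratically, and mu <= gamma_{a,s} + gamma_{b,s}. *)
Lemma entropy_integrand_abs_le x : Rabs (entropy_integrand a b s t x) <= entropy_majorant a b s x.
Proof.
assert (P0 := gauss_density_pos 0 1 x ltac:(lra)).
assert (P1 := gauss_density_pos a s x hs). assert (P2 := gauss_density_pos b s x hs).
assert (R1 : 0 < gauss_density a s x / gauss_density 0 1 x) by (apply Rdiv_lt_0_compat; auto).
assert (R2 : 0 < gauss_density b s x / gauss_density 0 1 x) by (apply Rdiv_lt_0_compat; auto).
set (A := (a ^ 2 + b ^ 2) / s + Rabs (ln s)). set (B := 2 / s + 1).
assert (B0 : 0 <= B) by (unfold B; assert (0 < 2 / s) by (apply Rdiv_lt_0_compat; lra); lra).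
assert (Hln : Rabs (ln (rel_density a b s t x)) <= A + B * x ^ 2).
{ rewrite rel_density_split.
  eapply Rle_trans; [apply ln_convex_comb_abs_le; auto |].
  rewrite !ln_gauss_ratio by auto.
  assert (La := log_gauss_ratio_abs_le a s x hs). assert (Lb := log_gauss_ratio_abs_le b s x hs).
  replace (A + B * x ^ 2) with
    ((a ^ 2 / s + Rabs (ln s) / 2 + (/ s + / 2) * x ^ 2) + (b ^ 2 / s + Rabs (ln s) / 2 + (/ s + / 2) * x ^ 2))
    by (unfold A, B; field; lra).
  lra. }
assert (Hmu : mixture_density a b s t x <= gauss_density a s x + gauss_density b s x)
  by (unfold mixture_density; nra).
assert (Da := gauss_quadratic_dominates a s A B x hs B0).
assert (Db := gauss_quadratic_dominates b s A B x hs B0).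
unfold entropy_integrand, entropy_majorant; fold A B.
rewrite Rabs_mult, (Rabs_pos_eq (mixture_density a b s t x)) by (left; apply mixture_density_pos).
assert (0 <= Rabs (ln (rel_density a b s t x))) by apply Rabs_pos.
assert (0 <= mixture_density a b s t x) by (left; apply mixture_density_pos).
nra.
Qed.

Lemma fisher_integrand_abs_le x :
  Rabs (fisher_integrand a b s t x) <= fisher_majorant a b s t x.
Proof.
destruct (fisher_integrand_bounds x) as [F0 F1]. rewrite Rabs_pos_eq; auto.
Qed.

Lemma fisher_majorant_integral : continuous_R (fisher_majorant a b s t) /\
  is_RInt_R (fisher_majorant a b s t)
    ((1 - t) * (a ^ 2 + (1 - / s) ^ 2 * s) + t * (b ^ 2 + (1 - / s) ^ 2 * s)).
Proof.
destruct (gauss_quadratic_sum_integral a b s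
  ((1 - t) * a ^ 2) ((1 - t) * (2 * a * (1 - / s))) ((1 - t) * (1 - / s) ^ 2)
  (t * b ^ 2) (t * (2 * b * (1 - / s))) (t * (1 - / s) ^ 2) hs) as [C I].
split; [exact C | eapply is_RInt_R_eq; [exact I | ring]].
Qed.

Lemma entropy_minorant_integral : continuous_R (entropy_minorant a b s t) /\
  is_RInt_R (entropy_minorant a b s t)
    ((1 - t) * (a ^ 2 / 2 - ln s / 2 + (/ 2 - / (2 * s)) * s) + xlnx (1 - t)
     + (t * (b ^ 2 / 2 - ln s / 2 + (/ 2 - / (2 * s)) * s) + xlnx t)).
Proof.
destruct (gauss_quadratic_sum_integral a b s
  ((1 - t) * (a ^ 2 / 2 - ln s / 2) + xlnx (1 - t)) ((1 - t) * a) ((1 - t) * (/ 2 - / (2 * s)))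
  (t * (b ^ 2 / 2 - ln s / 2) + xlnx t) (t * b) (t * (/ 2 - / (2 * s))) hs) as [C I].
split; [exact C | eapply is_RInt_R_eq; [exact I | ring]].
Qed.

Lemma entropy_majorant_integrable : continuous_R (entropy_majorant a b s) /\
  exists L, is_RInt_R (entropy_majorant a b s) L.
Proof.
set (A := (a ^ 2 + b ^ 2) / s + Rabs (ln s)). set (B := 2 / s + 1).
destruct (gauss_quadratic_sum_integral a b s
  (A + 2 * B * a ^ 2) 0 (2 * B) (A + 2 * B * b ^ 2) 0 (2 * B) hs) as [C I].
split; [exact C | eexists; exact I].
Qed.

End Mixture.

(* Half the Fisher majorant's integral minus the entropy minorant's integral:
   the means a, b cancel and the variance defect of s plus the mixing entropy
   remain. *)
Lemma majorant_minorant_gap a b s t : 0 < s ->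
  ((1 - t) * (a ^ 2 + (1 - / s) ^ 2 * s) + t * (b ^ 2 + (1 - / s) ^ 2 * s)) / 2
  - ((1 - t) * (a ^ 2 / 2 - ln s / 2 + (/ 2 - / (2 * s)) * s) + xlnx (1 - t)
     + (t * (b ^ 2 / 2 - ln s / 2 + (/ 2 - / (2 * s)) * s) + xlnx t))
  = / (2 * s) - / 2 + ln s / 2 - xlnx (1 - t) - xlnx t.
Proof. intros hs; field; lra. Qed.

Theorem lemma2 (a b sigma t : R) (hs : 0 < sigma <= 1) (ht : 0 <= t <= 1) :
  exists (f' : R -> R) (I1 I2 : R),
    (forall x, derivable_pt_lim (rel_density a b sigma t) x (f' x)) /\
    improper_int (fun x => (f' x / rel_density a b sigma t x) ^ 2
                           * mixture_density a b sigma t x) I1 /\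
    improper_int (fun x => ln (rel_density a b sigma t x)
                           * mixture_density a b sigma t x) I2 /\
    I1 / 2 - I2 <= / 4 * (/ sigma - 1) ^ 2 - xlnx (1 - t) - xlnx t.
Proof.
assert (s0 : 0 < sigma) by apply hs.
assert (CF := fisher_integrand_continuous a b sigma t s0 ht).
assert (CE := entropy_integrand_continuous a b sigma t s0 ht).
destruct (fisher_majorant_integral a b sigma t s0) as [CFM IFM].
destruct (entropy_minorant_integral a b sigma t s0) as [CEm IEm].
destruct (entropy_majorant_integrable a b sigma s0) as [CEM [L IEM]].
destruct (is_RInt_R_dominated _ _ _ CF CFM (fisher_integrand_abs_le a b sigma t s0 ht) IFM)
  as [I1 HI1].
destruct (is_RInt_R_dominated _ _ _ CE CEM (entropy_integrand_abs_le a b sigma t s0 ht) IEM)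
  as [I2 HI2].
exists (rel_density_derivative a b sigma t), I1, I2.
split; [exact (rel_density_derive a b sigma t s0) |].
split; [exact (is_RInt_R_improper_int _ _ CF HI1) |].
split; [exact (is_RInt_R_improper_int _ _ CE HI2) |].
(* I1 is at most the integral of the Fisher majorant, I2 at least that of the
   entropy minorant; what remains is the variance defect *)
assert (Le1 := is_RInt_R_le _ _ _ _ CF CFM HI1 IFM
  (fun x => proj2 (fisher_integrand_bounds a b sigma t s0 ht x))).
assert (Le2 := is_RInt_R_le _ _ _ _ CEm CE IEm HI2 (entropy_integrand_ge a b sigma t s0 ht)).
assert (Gap := majorant_minorant_gap a b sigma t s0).
assert (K := variance_defect_le sigma hs).
lra.
Qed.
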